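(* Let $(R,\mathfrak m)$ be a one-dimensional Cohen–Macaulay local ring and let $I,J$ be regular ideals of $R$. Suppose there exists $q\in I$ with $IJ=qJ$. Then for every regular trace ideal $L$ of $R$ with $L\subseteq\mathrm{tr}_R(J)$, the equality $IL=qL$ holds.
   Context: An ideal is regular if it contains a non-zerodivisor. The trace ideal of an $R$-module $M$ is $\mathrm{tr}_R(M)=\sum_{f\in\mathrm{Hom}_R(M,R)}\mathrm{Im}f$; an ideal is a trace ideal if it equals $\mathrm{tr}_R(M)$ for some $M$. *)

From HB Require Import structures.
From mathcomp Require Import all_boot all_order all_algebra.
Set Implicit Arguments. Unset Strict Implicit. Unset Printing Implicit Defensive.
Import GRing.Theory.
Local Open Scope ring_scope.

Section CommAlg.
Variable R : comNzRingType.

Definition set_eq (A B : R -> Prop) := forall x, A x <-> B x.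
Definition incl (A B : R -> Prop) := forall x, A x -> B x.

Definition is_ideal (I : R -> Prop) :=
  [/\ I 0, (forall x y, I x -> I y -> I (x + y)) & (forall r x, I x -> I (r * x))].

Definition is_prime_ideal (P : R -> Prop) :=
  [/\ is_ideal P, ~ P 1 & forall a b, P (a * b) -> P a \/ P b].

Definition is_maximal_ideal (M : R -> Prop) :=
  [/\ is_ideal M, ~ M 1 &
      forall J, is_ideal J -> incl M J -> set_eq J M \/ J 1].

Definition gen_ideal (s : seq R) (x : R) :=
  exists c : 'I_(size s) -> R, x = \sum_(i < size s) c i * s`_i.

Definition finitely_generated (I : R -> Prop) :=
  exists s : seq R, set_eq I (gen_ideal s).

Definition noetherian := forall I, is_ideal I -> finitely_generated I.

Definition is_local (m : R -> Prop) :=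
  is_maximal_ideal m /\ forall n, is_maximal_ideal n -> set_eq n m.

Definition prime_chain (n : nat) (P : nat -> R -> Prop) :=
  (forall i, (i <= n)%N -> is_prime_ideal (P i)) /\
  (forall i, (i < n)%N -> incl (P i) (P i.+1) /\ ~ incl (P i.+1) (P i)).

Definition krull_dim_eq (n : nat) :=
  (exists P, prime_chain n P) /\ ~ (exists P, prime_chain n.+1 P).

(* x is a non-zerodivisor on R / (s) *)
Definition nzd_mod (s : seq R) (x : R) :=
  forall r, gen_ideal s (x * r) -> gen_ideal s r.

Definition all_in (m : R -> Prop) (s : seq R) := forall x, x \in s -> m x.

Definition regular_seq (m : R -> Prop) (s : seq R) :=
  [/\ all_in m s, (forall i, (i < size s)%N -> nzd_mod (take i s) s`_i)
    & ~ gen_ideal s 1].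

Definition depth_eq (m : R -> Prop) (n : nat) :=
  (exists s, size s = n /\ regular_seq m s) /\
  ~ (exists s, size s = n.+1 /\ regular_seq m s).

Definition cohen_macaulay_local (m : R -> Prop) :=
  [/\ noetherian, is_local m & exists d, krull_dim_eq d /\ depth_eq m d].

Definition nonzerodivisor (x : R) := forall r, x * r = 0 -> r = 0.

Definition regular_ideal (I : R -> Prop) := exists x, I x /\ nonzerodivisor x.

Definition prod_ideal (I J : R -> Prop) (x : R) :=
  exists n (a b : 'I_n -> R), [/\ forall k, I (a k), forall k, J (b k)
    & x = \sum_(k < n) a k * b k].

Definition scale_ideal (q : R) (J : R -> Prop) (x : R) :=
  exists j, J j /\ x = q * j.

Definition hom_on (M : lmodType R) (N : M -> Prop) (f : M -> R) :=
  forall (a : R) (x y : M), N x -> N y -> f (a *: x + y) = a * f x + f y.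

(* trace of the R-module N (a submodule of M): sum of images of all
   homomorphisms N -> R, i.e. finite sums of values f_k(x_k) *)
Definition trace_sub (M : lmodType R) (N : M -> Prop) (r : R) :=
  exists n (f : 'I_n -> M -> R) (x : 'I_n -> M),
    [/\ forall k, hom_on N (f k), forall k, N (x k)
      & r = \sum_(k < n) f k (x k)].

Definition trace_mod (M : lmodType R) := trace_sub (fun _ : M => True).

Definition trace_ideal_of (J : R -> Prop) := @trace_sub R^o J.

Definition is_trace_ideal (L : R -> Prop) :=
  exists M : lmodType R, set_eq L (trace_mod M).

End CommAlg.

(* Since I and J are regular, so is IJ = qJ, hence q is a non-zerodivisor. If a is in I
   and l = sum f_k(x_k) is in tr(J), then a x_k = q j_k with j_k in J, so
   a l = q sum f_k(j_k) lies in qR. Thus for a in I, dividing by q gives an R-linear map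
   L -> R, l |-> a l / q. A trace ideal L = tr(M) is stable under every homomorphism
   L -> R (compose it with the maps M -> L), so a l / q lies in L, i.e. IL is contained
   in qL; the reverse inclusion holds since q is in I. *)
From mathcomp Require Import all_boot all_order all_algebra.
From Stdlib Require Import ClassicalEpsilon.
Set Implicit Arguments. Unset Strict Implicit.
Local Open Scope ring_scope.
Import GRing.Theory.

Section TraceIdeals.
Variable R : comNzRingType.
Implicit Types (q a : R) (I J L : R -> Prop).

Lemma ideal_sum L n (c : 'I_n -> R) :
  is_ideal L -> (forall k, L (c k)) -> L (\sum_(k < n) c k).
Proof. by case=> L0 LD _ Lc; apply: big_ind. Qed.

Lemma prod_ideal_mul I J a b : I a -> J b -> prod_ideal I J (a * b).
Proof. by move=> Ia Jb; exists 1%N, (fun _ => a), (fun _ => b); rewrite big_ord1. Qed.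

Lemma trace_sub_hom (M : lmodType R) (N : M -> Prop) f x :
  hom_on N f -> N x -> trace_sub N (f x).
Proof. by move=> Hf Nx; exists 1%N, (fun _ => f), (fun _ => x); rewrite big_ord1. Qed.

Lemma hom_on0 (M : lmodType R) (N : M -> Prop) (f : M -> R) :
  hom_on N f -> N 0 -> f 0 = 0.
Proof.
move=> Hf N0; have /eqP := Hf 1 0 0 N0 N0; rewrite scaler0 addr0 mul1r.
by rewrite -subr_eq subrr eq_sym => /eqP.
Qed.

Lemma hom_onZ (M : lmodType R) (N : M -> Prop) (f : M -> R) a (x : M) :
  hom_on N f -> N 0 -> N x -> f (a *: x) = a * f x.
Proof.
by move=> Hf N0 Nx; have := Hf a x 0 Nx N0; rewrite !addr0 (hom_on0 Hf N0) addr0.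
Qed.

Lemma hom_on_sum L (f : R -> R) n (c : 'I_n -> R) :
  is_ideal L -> @hom_on R R^o L f -> (forall k, L (c k)) ->
  f (\sum_(k < n) c k) = \sum_(k < n) f (c k).
Proof.
case=> L0 LD _ Hf Lc.
suff [] : L (\sum_(k < n) c k) /\ f (\sum_(k < n) c k) = \sum_(k < n) f (c k) by [].
apply: (big_ind2 (fun x y => L x /\ f x = y)) => [|x x' y y' [Lx <-] [Ly <-]|k _].
- by split; last exact: (hom_on0 Hf L0).
- by split; [exact: LD | have := Hf 1 x y Lx Ly; rewrite scale1r mul1r].
- by split.
Qed.

Lemma trace_ideal_hom_closed (M : lmodType R) L (f : R -> R) l :
  is_ideal L -> set_eq L (trace_mod M) -> @hom_on R R^o L f -> L l -> L (f l).
Proof.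
move=> HL LM Hf /LM [n [g [z [Hg _ ->]]]].
have Lg k w : L (g k w) by apply/LM; exact: trace_sub_hom.
rewrite (hom_on_sum HL Hf) //; apply/LM.
exists n, (fun k w => f (g k w)), z; split=> // k b w w' _ _.
by rewrite (Hg k b w w' Logic.I Logic.I) (Hf b _ _ (Lg k w) (Lg k w')).
Qed.

Lemma nonzerodivisor_mulI q : nonzerodivisor q -> injective ( *%R q).
Proof.
by move=> Hq u v E; apply/eqP; rewrite -subr_eq0; apply/eqP/Hq; rewrite mulrBr E subrr.
Qed.

Lemma reduction_nonzerodivisor I J q :
  regular_ideal I -> regular_ideal J ->
  set_eq (prod_ideal I J) (scale_ideal q J) -> nonzerodivisor q.
Proof.
move=> [a [Ia na]] [b [Jb nb]] HIJ r qr0.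
have [j [_ Ej]] := proj1 (HIJ _) (prod_ideal_mul Ia Jb).
by apply/nb/na; rewrite mulrA Ej mulrAC qr0 mul0r.
Qed.

Lemma reduction_mul_trace I J q a l :
  is_ideal J -> set_eq (prod_ideal I J) (scale_ideal q J) ->
  I a -> trace_ideal_of J l -> exists r, a * l = q * r.
Proof.
move=> [J0 _ _] HIJ Ia [n [f [x [Hf Jx ->]]]].
have /fin_all_exists [j Hj] k : exists j, J j /\ a * x k = q * j.
  exact/HIJ/prod_ideal_mul.
exists (\sum_(k < n) f k (j k)); rewrite !mulr_sumr; apply: eq_bigr => k _.
have [Jj Ej] := Hj k.
rewrite -(hom_onZ _ (Hf k) J0 (Jx k)) -(hom_onZ _ (Hf k) J0 Jj).
congr (f k _); exact: Ej.
Qed.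

(* When [q] does not divide [x], [divr_by q x] is an arbitrary junk value. *)
Definition divr_by q x : R := epsilon (inhabits 0) (fun r => x = q * r).

Lemma divr_byK q x : (exists r, x = q * r) -> x = q * divr_by q x.
Proof. exact: epsilon_spec. Qed.

Lemma divr_by_mul_hom L q a :
  is_ideal L -> nonzerodivisor q -> (forall l, L l -> exists r, a * l = q * r) ->
  @hom_on R R^o L (fun l => divr_by q (a * l)).
Proof.
move=> [_ LD LM] Hq Hdiv b x y Lx Ly.
have divK l : L l -> a * l = q * divr_by q (a * l) by move/Hdiv/divr_byK.
change (b *: x) with (b * x); apply: (nonzerodivisor_mulI Hq) => /=.
rewrite -divK; last by apply: LD => //; exact: LM.
by rewrite !mulrDr mulrCA [q * (b * _)]mulrCA -(divK x Lx) -(divK y Ly).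
Qed.

End TraceIdeals.

Theorem lemma2p4 (R : comNzRingType) (m : R -> Prop)
  (HCM : cohen_macaulay_local m) (Hdim : krull_dim_eq R 1)
  (I J : R -> Prop) (HI : is_ideal I) (HJ : is_ideal J)
  (HIr : regular_ideal I) (HJr : regular_ideal J)
  (q : R) (HqI : I q) (HIJ : set_eq (prod_ideal I J) (scale_ideal q J)) :
  forall L : R -> Prop, is_ideal L -> regular_ideal L -> is_trace_ideal L ->
    incl L (trace_ideal_of J) ->
    set_eq (prod_ideal I L) (scale_ideal q L).
Proof.
move=> L HL _ [M LM] LJ x; split; last first.
  by case=> l [Ll ->]; exact: prod_ideal_mul.
have Hq := reduction_nonzerodivisor HIr HJr HIJ.
have Hdiv a : I a -> forall l, L l -> exists r, a * l = q * r.
  by move=> Ia l /LJ; exact: reduction_mul_trace HJ HIJ Ia.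
case=> n [a [b [Ia Lb ->]]].
exists (\sum_(k < n) divr_by q (a k * b k)); split.
  apply: ideal_sum => // k.
  exact: trace_ideal_hom_closed HL LM (divr_by_mul_hom HL Hq (Hdiv _ (Ia k))) (Lb k).
by rewrite mulr_sumr; apply: eq_bigr => k _; apply/divr_byK/Hdiv.
Qed.
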